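(* Let $F:(0,\infty)\to(0,\infty)$ be strictly decreasing and let $(x_n)_{n\in\mathbb Z}$ be an equilibrium configuration for $F$. Let $k\le m$ be integers and $S=\{k,k+1,\dots,m\}$. For $i\in S$ let $$G_i=\sum_{j\in S,\,j<i}F(x_i-x_j)-\sum_{j\in S,\,j>i}F(x_j-x_i)$$ be the signed force (positive meaning to the right) exerted on the particle at $x_i$ by the particles of $S$ only. Then $G_k\le G_{k+1}\le\dots\le G_m$.
   Context: A configuration is a strictly increasing bi-infinite sequence $(x_n)_{n\in\mathbb Z}$ of reals. The particle at $x_n$ is in equilibrium if $\sum_{m<n}F(x_n-x_m)$ and $\sum_{m>n}F(x_m-x_n)$ are both finite and equal. An equilibrium configuration is one in which every particle is in equilibrium. *)

From Stdlib Require Import Reals ZArith List.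
Open Scope R_scope.

Definition configuration (x : Z -> R) : Prop :=
  forall n m : Z, (n < m)%Z -> x n < x m.

Definition left_terms (F : R -> R) (x : Z -> R) (n : Z) (k : nat) : R :=
  F (x n - x (n - Z.of_nat (S k))%Z).

Definition right_terms (F : R -> R) (x : Z -> R) (n : Z) (k : nat) : R :=
  F (x (n + Z.of_nat (S k))%Z - x n).

Definition in_equilibrium (F : R -> R) (x : Z -> R) (n : Z) : Prop :=
  exists l : R, infinite_sum (left_terms F x n) l /\ infinite_sum (right_terms F x n) l.

Definition equilibrium_configuration (F : R -> R) (x : Z -> R) : Prop :=
  configuration x /\ forall n : Z, in_equilibrium F x n.

(* The integers k, k+1, ..., m (empty if m < k). *)
Definition zrange (k m : Z) : list Z :=
  map (fun t => (k + Z.of_nat t)%Z) (seq 0 (Z.to_nat (m - k + 1))).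

Definition G (F : R -> R) (x : Z -> R) (k m i : Z) : R :=
  fold_right Rplus 0
    (map (fun j => if Z.ltb j i then F (x i - x j) else 0) (zrange k m))
  - fold_right Rplus 0
    (map (fun j => if Z.ltb i j then F (x j - x i) else 0) (zrange k m)).

From Stdlib Require Import Reals ZArith List Lia Lra.
Open Scope R_scope.

(* The total force on every particle vanishes, so the force exerted on
   particle i by the particles of S is minus the force exerted by the
   particles outside S.  Moving from particle i to particle i+1 takes it
   farther from every particle to the left of S and closer to every particle
   to the right of S; as F is decreasing, both changes push the outside force
   to the left, hence G can only increase.  The infinite sums are handled by
   comparing finite symmetric windows around i and passing to the limit. *)

Definition sum_over (f : Z -> R) (l : list Z) : R := fold_right Rplus 0 (map f l).

Lemma sum_over_cons f a l : sum_over f (a :: l) = f a + sum_over f l.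
Proof. reflexivity. Qed.

Lemma sum_over_single f a : sum_over f (a :: nil) = f a.
Proof. unfold sum_over; simpl. lra. Qed.

Lemma sum_over_app f l1 l2 : sum_over f (l1 ++ l2) = sum_over f l1 + sum_over f l2.
Proof. induction l1 as [|a l1 IH]; unfold sum_over in *; simpl; [lra | rewrite IH; lra]. Qed.

Lemma sum_over_minus f g l :
  sum_over (fun j => f j - g j) l = sum_over f l - sum_over g l.
Proof. induction l as [|a l IH]; unfold sum_over in *; simpl; [lra | rewrite IH; lra]. Qed.

Lemma sum_over_nonpos f l : (forall j, In j l -> f j <= 0) -> sum_over f l <= 0.
Proof.
  induction l as [|a l IH]; intros Hf; unfold sum_over in *; simpl; [lra |].
  assert (f a <= 0) by (apply Hf; now left).
  assert (fold_right Rplus 0 (map f l) <= 0) by (apply IH; intros; apply Hf; now right).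
  lra.
Qed.

Lemma zrange_shift_seq (b : nat) : forall (a : nat) (A : Z),
  map (fun t => (A + Z.of_nat t)%Z) (seq a b)
  = map (fun t => ((A + Z.of_nat a) + Z.of_nat t)%Z) (seq 0 b).
Proof.
  induction b as [|b IH]; intros a A; simpl; auto.
  f_equal; [lia |]. rewrite IH, (IH 1%nat (A + Z.of_nat a)%Z).
  apply map_ext; intros; lia.
Qed.

Lemma zrange_split a b c : (a - 1 <= b)%Z -> (b <= c)%Z ->
  zrange a c = zrange a b ++ zrange (b + 1) c.
Proof.
  intros Hab Hbc. unfold zrange.
  replace (Z.to_nat (c - a + 1))
    with (Z.to_nat (b - a + 1) + Z.to_nat (c - (b + 1) + 1))%nat by lia.
  rewrite seq_app, map_app. f_equal.
  rewrite zrange_shift_seq. apply map_ext; intros; lia.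
Qed.

Lemma zrange_single a : zrange a a = a :: nil.
Proof. unfold zrange. replace (a - a + 1)%Z with 1%Z by lia. simpl. f_equal; lia. Qed.

Lemma zrange_cons a b : (a <= b)%Z -> zrange a b = a :: zrange (a + 1) b.
Proof. intros Hab. rewrite (zrange_split a a b), zrange_single by lia. reflexivity. Qed.

Lemma zrange_rcons a b : (a <= b + 1)%Z -> zrange a (b + 1) = zrange a b ++ (b + 1)%Z :: nil.
Proof. intros Hab. rewrite (zrange_split a b (b + 1)), zrange_single by lia. reflexivity. Qed.

Lemma in_zrange a b j : In j (zrange a b) -> (a <= j <= b)%Z.
Proof.
  unfold zrange; intros Hj. apply in_map_iff in Hj as [t [<- Ht]].
  apply in_seq in Ht. lia.
Qed.

Section PairForce.
Variables (F : R -> R) (x : Z -> R).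

Definition pair_force (c j : Z) : R :=
  (if Z.ltb j c then F (x c - x j) else 0) - (if Z.ltb c j then F (x j - x c) else 0).

Lemma G_sum_pair_force k m c : G F x k m c = sum_over (pair_force c) (zrange k m).
Proof. unfold pair_force. rewrite sum_over_minus. reflexivity. Qed.

Lemma pair_force_lt c j : (j < c)%Z -> pair_force c j = F (x c - x j).
Proof.
  intros Hjc. unfold pair_force.
  rewrite (proj2 (Z.ltb_lt j c)), (proj2 (Z.ltb_ge c j)) by lia. lra.
Qed.

Lemma pair_force_gt c j : (c < j)%Z -> pair_force c j = - F (x j - x c).
Proof.
  intros Hcj. unfold pair_force.
  rewrite (proj2 (Z.ltb_ge j c)), (proj2 (Z.ltb_lt c j)) by lia. lra.
Qed.

Lemma pair_force_self c : pair_force c c = 0.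
Proof. unfold pair_force. rewrite Z.ltb_irrefl. lra. Qed.

Lemma sum_pair_force_left c n :
  sum_over (pair_force c) (zrange (c - Z.of_nat (S n)) (c - 1))
  = sum_f_R0 (left_terms F x c) n.
Proof.
  induction n as [|n IH].
  - replace (c - Z.of_nat 1)%Z with (c - 1)%Z by lia.
    rewrite zrange_single, sum_over_single.
    rewrite pair_force_lt by lia. unfold left_terms; cbn [sum_f_R0].
    replace (c - Z.of_nat 1)%Z with (c - 1)%Z by lia. lra.
  - rewrite zrange_cons by lia.
    replace (c - Z.of_nat (S (S n)) + 1)%Z with (c - Z.of_nat (S n))%Z by lia.
    rewrite tech5, <- IH, sum_over_cons.
    rewrite pair_force_lt by lia. unfold left_terms. lra.
Qed.

Lemma sum_pair_force_right c n :
  sum_over (pair_force c) (zrange (c + 1) (c + Z.of_nat (S n)))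
  = - sum_f_R0 (right_terms F x c) n.
Proof.
  induction n as [|n IH].
  - replace (c + Z.of_nat 1)%Z with (c + 1)%Z by lia.
    rewrite zrange_single, sum_over_single.
    rewrite pair_force_gt by lia. unfold right_terms; cbn [sum_f_R0].
    replace (c + Z.of_nat 1)%Z with (c + 1)%Z by lia. lra.
  - replace (c + Z.of_nat (S (S n)))%Z with (c + Z.of_nat (S n) + 1)%Z by lia.
    rewrite zrange_rcons, sum_over_app, IH, tech5 by lia.
    rewrite sum_over_single, pair_force_gt by lia. unfold right_terms.
    replace (c + Z.of_nat (S n) + 1)%Z with (c + Z.of_nat (S (S n)))%Z by lia. lra.
Qed.

Lemma sum_pair_force_window c n p :
  sum_over (pair_force c) (zrange (c - Z.of_nat (S n)) (c + Z.of_nat (S p)))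
  = sum_f_R0 (left_terms F x c) n - sum_f_R0 (right_terms F x c) p.
Proof.
  rewrite (zrange_split _ (c - 1)) by lia.
  replace (c - 1 + 1)%Z with c by lia.
  rewrite (zrange_cons c) by lia.
  rewrite sum_over_app, sum_pair_force_left.
  rewrite sum_over_cons, pair_force_self, sum_pair_force_right. lra.
Qed.

Lemma equilibrium_window_cvg c a b : in_equilibrium F x c ->
  Un_cv (fun N => sum_over (pair_force c)
                    (zrange (c - Z.of_nat (S (N + a))) (c + Z.of_nat (S (N + b))))) 0.
Proof.
  intros [l [Hleft Hright]].
  apply Un_cv_ext with
    (fun N => sum_f_R0 (left_terms F x c) (N + a) - sum_f_R0 (right_terms F x c) (N + b)).
  { intros N. symmetry. apply sum_pair_force_window. }
  replace 0 with (l - l) by lra.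
  apply CV_minus; apply (CV_shift' (fun N => sum_f_R0 _ N)); assumption.
Qed.

Lemma pair_force_succ_le i j : configuration x ->
  (forall s t, 0 < s -> s < t -> F t < F s) ->
  (j < i \/ i + 1 < j)%Z -> pair_force (i + 1) j <= pair_force i j.
Proof.
  intros Hconf Fdec Hj.
  assert (Hstep : x i < x (i + 1)%Z) by (apply Hconf; lia).
  destruct Hj as [Hj | Hj].
  - rewrite !pair_force_lt by lia.
    assert (x j < x i) by (apply Hconf; lia).
    left; apply Fdec; lra.
  - rewrite !pair_force_gt by lia.
    assert (x (i + 1)%Z < x j) by (apply Hconf; lia).
    apply Ropp_le_contravar; left; apply Fdec; lra.
Qed.

Lemma window_force_increment_le k m i a b : configuration x ->
  (forall s t, 0 < s -> s < t -> F t < F s) ->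
  (a <= k)%Z -> (k <= i)%Z -> (i < m)%Z -> (m <= b)%Z ->
  sum_over (pair_force (i + 1)) (zrange a b) - sum_over (pair_force i) (zrange a b)
  <= G F x k m (i + 1) - G F x k m i.
Proof.
  intros Hconf Fdec Hak Hki Him Hmb.
  rewrite <- sum_over_minus, !G_sum_pair_force, <- sum_over_minus.
  rewrite (zrange_split a (k - 1) b) by lia.
  replace (k - 1 + 1)%Z with k by lia.
  rewrite (zrange_split k m b) by lia.
  rewrite !sum_over_app.
  assert (Hout : forall l, (forall j, In j l -> j < k \/ m < j)%Z ->
            sum_over (fun j => pair_force (i + 1) j - pair_force i j) l <= 0).
  { intros l Hl. apply sum_over_nonpos. intros j Hj.
    pose proof (pair_force_succ_le i j Hconf Fdec ltac:(specialize (Hl j Hj); lia)). lra. }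
  pose proof (Hout (zrange a (k - 1)) ltac:(intros j Hj; apply in_zrange in Hj; lia)).
  pose proof (Hout (zrange (m + 1) b) ltac:(intros j Hj; apply in_zrange in Hj; lia)).
  lra.
Qed.

End PairForce.

Lemma cv_le_const (u : nat -> R) (l d : R) : (forall n, u n <= d) -> Un_cv u l -> l <= d.
Proof.
  intros Hu Hcv. apply (Rle_cv_lim Hu Hcv).
  intros e He. exists 0%nat. intros n _. unfold Rdist. rewrite Rminus_diag, Rabs_R0. exact He.
Qed.

Theorem mainTheorem6 (F : R -> R)
  (Fpos : forall t : R, 0 < t -> 0 < F t)
  (Fdec : forall s t : R, 0 < s -> s < t -> F t < F s)
  (x : Z -> R) (Heq : equilibrium_configuration F x)
  (k m : Z) (Hkm : (k <= m)%Z) :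
  forall i : Z, (k <= i)%Z -> (i < m)%Z -> G F x k m i <= G F x k m (i + 1).
Proof.
  intros i Hki Him. destruct Heq as [Hconf Hequil].
  set (M := (Z.to_nat (i - k) + Z.to_nat (m - i))%nat).
  set (window := fun N => zrange (i - Z.of_nat (S (N + M))) (i + 1 + Z.of_nat (S (N + M)))).
  assert (Hcv_i : Un_cv (fun N => sum_over (pair_force F x i) (window N)) 0).
  { apply Un_cv_ext with (2 := equilibrium_window_cvg F x i M (S M) (Hequil i)).
    intros N. unfold window. do 2 f_equal; lia. }
  assert (Hcv_succ : Un_cv (fun N => sum_over (pair_force F x (i + 1)) (window N)) 0).
  { apply Un_cv_ext with (2 := equilibrium_window_cvg F x (i + 1) (S M) M (Hequil (i + 1)%Z)).
    intros N. unfold window. do 2 f_equal; lia. }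
  cut (0 - 0 <= G F x k m (i + 1) - G F x k m i); [lra |].
  apply (cv_le_const (fun N => sum_over (pair_force F x (i + 1)) (window N)
                               - sum_over (pair_force F x i) (window N))).
  - intros N. apply window_force_increment_le; auto; lia.
  - apply CV_minus; assumption.
Qed.
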